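(* Let $\mathbf C$ be a symmetric monoidal restriction category. Then $\mathrm{Aux}(\mathbf C)$, with the restriction structure $\overline{[f,E]}=[\rho^{-1}\circ\overline f,I]$, is a symmetric monoidal restriction category, where the tensor unit and the tensor product of objects are as in $\mathbf C$, the tensor product of $[f,E]\colon A\to B$ and $[f',E']\colon A'\to B'$ is $[\vartheta\circ(f\otimes f'),\,E\otimes E']\colon A\otimes A'\to B\otimes B'$ with $\vartheta\colon(B\otimes E)\otimes(B'\otimes E')\to(B\otimes B')\otimes(E\otimes E')$ the canonical coherence isomorphism of $\mathbf C$, and each coherence isomorphism $\beta$ (associator, unitors, symmetry) of $\mathrm{Aux}(\mathbf C)$ is $[\rho^{-1}\circ\beta,I]$ for the corresponding coherence isomorphism $\beta$ of $\mathbf C$. In particular this tensor product is well defined on $\sim$-classes and satisfies $\overline{[f,E]\otimes[f',E']}=\overline{[f,E]}\otimes\overline{[f',E']}$.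
   Context: A restriction category is a category equipped with an assignment to each morphism $f\colon A\to B$ of an endomorphism $\overline{f}\colon A\to A$ such that (i) $f\circ\overline f=f$; (ii) $\overline f\circ\overline g=\overline g\circ\overline f$ whenever $f,g$ have a common domain; (iii) $\overline{g\circ\overline f}=\overline g\circ\overline f$ whenever $f,g$ have a common domain; (iv) $\overline g\circ f=f\circ\overline{g\circ f}$ whenever $g\circ f$ is defined. A morphism $f$ is total if $\overline f=\mathrm{id}$. A (symmetric) monoidal restriction category is a restriction category with a (symmetric) monoidal structure such that $\overline{f\otimes g}=\overline f\otimes\overline g$. Let $\mathbf C$ be a symmetric monoidal restriction category with tensor unit $I$, associator $\alpha$, left unitor $\lambda$, right unitor $\rho$. For morphisms $f\colon A\to B\otimes E$ and $f'\colon A\to B\otimes E'$ write $f\triangleright f'$ if $\overline f=\overline{f'}$ and there is a morphism $h\colon E\to E'$ with $(\mathrm{id}_B\otimes h)\circ f=f'$. Let $\sim$ be the equivalence relation generated by $\triangleright$ (on morphisms of the form $A\to B\otimes X$ for fixed $A,B$ and varying $X$). The category $\mathrm{Aux}(\mathbf C)$ has the objects of $\mathbf C$; a morphism $A\to B$ is a $\sim$-class $[f,E]$ of a morphism $f\colon A\to B\otimes E$ of $\mathbf C$; the composite of $[f,E]\colon A\to B$ and $[g,E']\colon B\to C$ is $[\alpha\circ(g\otimes\mathrm{id}_E)\circ f,\;E'\otimes E]$; the identity on $A$ is $[\rho_A^{-1},I]$. *)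

From Stdlib Require Import Relations.

Set Implicit Arguments.
Unset Strict Implicit.

(** Composition [cmp g f] is "g after f". Conventions:
      asc A B C : (A ⊗ B) ⊗ C -> A ⊗ (B ⊗ C)   (associator α), asci its inverse
      lu A : I ⊗ A -> A  (left unitor λ), lui its inverse
      ru A : A ⊗ I -> A  (right unitor ρ), rui its inverse
      sym A B : A ⊗ B -> B ⊗ A  (symmetry). *)
Record smr_data := {
  Ob : Type;
  Hom : Ob -> Ob -> Type;
  cmp : forall A B C, Hom B C -> Hom A B -> Hom A C;
  idm : forall A, Hom A A;
  rst : forall A B, Hom A B -> Hom A A;
  ten : Ob -> Ob -> Ob;
  tenm : forall A B C D, Hom A B -> Hom C D -> Hom (ten A C) (ten B D);
  unt : Ob;
  asc : forall A B C, Hom (ten (ten A B) C) (ten A (ten B C));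
  asci : forall A B C, Hom (ten A (ten B C)) (ten (ten A B) C);
  lu : forall A, Hom (ten unt A) A;
  lui : forall A, Hom A (ten unt A);
  ru : forall A, Hom (ten A unt) A;
  rui : forall A, Hom A (ten A unt);
  sym : forall A B, Hom (ten A B) (ten B A)
}.

Arguments Hom : clear implicits.
Arguments cmp {s A B C} _ _.
Arguments idm {s} A.
Arguments rst {s A B} _.
Arguments ten {s} _ _.
Arguments tenm {s A B C D} _ _.
Arguments unt {s}.
Arguments asc {s} A B C.
Arguments asci {s} A B C.
Arguments lu {s} A.
Arguments lui {s} A.
Arguments ru {s} A.
Arguments rui {s} A.
Arguments sym {s} A B.

(** The axioms of a symmetric monoidal restriction category, stated up to a
    given equality [heq] on each hom-set (a setoid-enriched presentation, so
    that a category whose hom-sets are quotients can be described by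
    representatives). *)
Record is_smrc (D : smr_data) (heq : forall A B, Hom D A B -> Hom D A B -> Prop)
  : Prop := {
  heq_equiv : forall A B, equivalence (Hom D A B) (heq A B);
  cmp_proper : forall A B C (g g' : Hom D B C) (f f' : Hom D A B),
      heq _ _ g g' -> heq _ _ f f' -> heq _ _ (cmp g f) (cmp g' f');
  rst_proper : forall A B (f f' : Hom D A B), heq _ _ f f' -> heq _ _ (rst f) (rst f');
  tenm_proper : forall A B C E (f f' : Hom D A B) (g g' : Hom D C E),
      heq _ _ f f' -> heq _ _ g g' -> heq _ _ (tenm f g) (tenm f' g');
  cmpA : forall A B C E (h : Hom D C E) (g : Hom D B C) (f : Hom D A B),
      heq _ _ (cmp h (cmp g f)) (cmp (cmp h g) f);
  cmp1l : forall A B (f : Hom D A B), heq _ _ (cmp (idm B) f) f;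
  cmp1r : forall A B (f : Hom D A B), heq _ _ (cmp f (idm A)) f;
  R1 : forall A B (f : Hom D A B), heq _ _ (cmp f (rst f)) f;
  R2 : forall A B C (f : Hom D A B) (g : Hom D A C),
      heq _ _ (cmp (rst f) (rst g)) (cmp (rst g) (rst f));
  R3 : forall A B C (f : Hom D A B) (g : Hom D A C),
      heq _ _ (rst (cmp g (rst f))) (cmp (rst g) (rst f));
  R4 : forall A B C (f : Hom D A B) (g : Hom D B C),
      heq _ _ (cmp (rst g) f) (cmp f (rst (cmp g f)));
  tenm_cmp : forall A B C A' B' C' (f : Hom D A B) (g : Hom D B C)
      (f' : Hom D A' B') (g' : Hom D B' C'),
      heq _ _ (tenm (cmp g f) (cmp g' f')) (cmp (tenm g g') (tenm f f'));
  tenm_id : forall A B, heq _ _ (tenm (idm A) (idm B)) (idm (ten A B));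
  asc_iso1 : forall A B C, heq _ _ (cmp (asc A B C) (asci A B C)) (idm _);
  asc_iso2 : forall A B C, heq _ _ (cmp (asci A B C) (asc A B C)) (idm _);
  lu_iso1 : forall A, heq _ _ (cmp (lu A) (lui A)) (idm _);
  lu_iso2 : forall A, heq _ _ (cmp (lui A) (lu A)) (idm _);
  ru_iso1 : forall A, heq _ _ (cmp (ru A) (rui A)) (idm _);
  ru_iso2 : forall A, heq _ _ (cmp (rui A) (ru A)) (idm _);
  sym_inv : forall A B, heq _ _ (cmp (sym B A) (sym A B)) (idm _);
  asc_nat : forall A A' B B' C C' (f : Hom D A A') (g : Hom D B B') (h : Hom D C C'),
      heq _ _ (cmp (asc A' B' C') (tenm (tenm f g) h))
          (cmp (tenm f (tenm g h)) (asc A B C));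
  lu_nat : forall A B (f : Hom D A B),
      heq _ _ (cmp (lu B) (tenm (idm unt) f)) (cmp f (lu A));
  ru_nat : forall A B (f : Hom D A B),
      heq _ _ (cmp (ru B) (tenm f (idm unt))) (cmp f (ru A));
  sym_nat : forall A A' B B' (f : Hom D A A') (g : Hom D B B'),
      heq _ _ (cmp (sym A' B') (tenm f g)) (cmp (tenm g f) (sym A B));
  pentagon : forall A B C E,
      heq _ _ (cmp (asc A B (ten C E)) (asc (ten A B) C E))
          (cmp (tenm (idm A) (asc B C E))
               (cmp (asc A (ten B C) E) (tenm (asc A B C) (idm E))));
  triangle : forall A B,
      heq _ _ (cmp (tenm (idm A) (lu B)) (asc A unt B)) (tenm (ru A) (idm B));
  hexagon : forall A B C,
      heq _ _ (cmp (tenm (idm B) (sym A C)) (cmp (asc B A C) (tenm (sym A B) (idm C))))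
          (cmp (asc B C A) (cmp (sym A (ten B C)) (asc A B C)));
  rst_tenm : forall A B C E (f : Hom D A B) (g : Hom D C E),
      heq _ _ (rst (tenm f g)) (tenm (rst f) (rst g))
}.

Definition SMRC (C : smr_data) : Prop := is_smrc (fun A B => @eq (Hom C A B)).

Section Aux.
Variable C : smr_data.

(** Representatives of morphisms A -> B of Aux(C): pairs (E, f : A -> B ⊗ E). *)
Definition auxHom (A B : Ob C) : Type := { E : Ob C & Hom C A (ten B E) }.

Definition aux_tri (A B : Ob C) (p q : auxHom A B) : Prop :=
  rst (projT2 p) = rst (projT2 q) /\
  exists h : Hom C (projT1 p) (projT1 q),
    cmp (tenm (idm B) h) (projT2 p) = projT2 q.

Definition aux_sim (A B : Ob C) : relation (auxHom A B) :=
  clos_refl_sym_trans (auxHom A B) (@aux_tri A B).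

Definition theta (B E B' E' : Ob C) :
  Hom C (ten (ten B E) (ten B' E')) (ten (ten B B') (ten E E')) :=
  cmp (asci B B' (ten E E'))
  (cmp (tenm (idm B) (asc B' E E'))
  (cmp (tenm (idm B) (tenm (sym E B') (idm E')))
  (cmp (tenm (idm B) (asci E B' E'))
       (asc B E (ten B' E'))))).

Definition aux_cmp (A B D : Ob C) (q : auxHom B D) (p : auxHom A B) : auxHom A D :=
  existT _ (ten (projT1 q) (projT1 p))
    (cmp (asc D (projT1 q) (projT1 p)) (cmp (tenm (projT2 q) (idm (projT1 p))) (projT2 p))).

Definition aux_of (A B : Ob C) (g : Hom C A B) : auxHom A B :=
  existT _ unt (cmp (rui B) g).

Definition aux_id (A : Ob C) : auxHom A A := existT _ unt (rui A).

Definition aux_rst (A B : Ob C) (p : auxHom A B) : auxHom A A :=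
  existT _ unt (cmp (rui A) (rst (projT2 p))).

Definition aux_tenm (A B A' B' : Ob C) (p : auxHom A B) (p' : auxHom A' B')
  : auxHom (ten A A') (ten B B') :=
  existT _ (ten (projT1 p) (projT1 p'))
    (cmp (theta B (projT1 p) B' (projT1 p')) (tenm (projT2 p) (projT2 p'))).

Definition Aux_data : smr_data := {|
  Ob := Ob C;
  Hom := auxHom;
  cmp := aux_cmp;
  idm := aux_id;
  rst := aux_rst;
  ten := @ten C;
  tenm := aux_tenm;
  unt := @unt C;
  asc := fun A B D => aux_of (asc A B D);
  asci := fun A B D => aux_of (asci A B D);
  lu := fun A => aux_of (lu A);
  lui := fun A => aux_of (lui A);
  ru := fun A => aux_of (ru A);
  rui := fun A => aux_of (rui A);
  sym := fun A B => aux_of (sym A B)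
|}.

End Aux.

(** The key observation is that whenever
    [f' = (id ⊗ h) ∘ f] for a *total* [h] (e.g. a coherence isomorphism), then
    [f ▷ f'], because postcomposing with a total map does not change the
    restriction (lemma [sim_of_tri]).  Every axiom of a symmetric monoidal
    restriction category for Aux(C) is thus reduced to an equation in C of the
    form "a coherence isomorphism relates the two auxiliary outputs". *)

From Stdlib Require Import Relations Setoid Morphisms RelationClasses.

Section AuxCategory.
Context {C : smr_data} (HC : SMRC C).
Implicit Types A B D E F G X Y Z W : Ob C.

Local Notation "g ∘ f" := (cmp g f) (at level 44, right associativity).
Local Notation "f ⊗ g" := (tenm f g) (at level 34).
Local Notation Hm := (Hom C).
Local Notation "'ι' X" := (@idm C X) (at level 0, X at level 0).
Local Notation th := (@theta C).

Lemma compA {A B D E} (h : Hm D E) (g : Hm B D) (f : Hm A B) : h ∘ g ∘ f = (h ∘ g) ∘ f.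
Proof. exact (cmpA HC h g f). Qed.
Lemma comp_id_l {A B} (f : Hm A B) : ι B ∘ f = f. Proof. exact (cmp1l HC f). Qed.
Lemma comp_id_r {A B} (f : Hm A B) : f ∘ ι A = f. Proof. exact (cmp1r HC f). Qed.
Lemma ten_comp {A B D A' B' D'} (f : Hm A B) (g : Hm B D) (f' : Hm A' B') (g' : Hm B' D') :
  (g ∘ f) ⊗ (g' ∘ f') = (g ⊗ g') ∘ (f ⊗ f').
Proof. exact (tenm_cmp HC f g f' g'). Qed.
Lemma ten_id A B : ι A ⊗ ι B = ι (@ten C A B). Proof. exact (tenm_id HC A B). Qed.

Ltac rassoc := repeat rewrite <- compA.

(** To prove [x = y] it suffices to prove [x ∘ k = y ∘ k] for a generic [k];
    this gives right-nested composites a tail to which rewriting can attach. *)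
Lemma eq_by_precomp {A B} (x y : Hm A B) : (forall D (k : Hm D A), x ∘ k = y ∘ k) -> x = y.
Proof. intro H. rewrite <- (comp_id_r x), <- (comp_id_r y). apply H. Qed.

Lemma ten_comp_l {A B D X} (g : Hm B D) (f : Hm A B) : (g ∘ f) ⊗ ι X = (g ⊗ ι X) ∘ (f ⊗ ι X).
Proof. rewrite <- ten_comp, comp_id_l. reflexivity. Qed.
Lemma ten_comp_r {A B D X} (g : Hm B D) (f : Hm A B) : ι X ⊗ (g ∘ f) = (ι X ⊗ g) ∘ (ι X ⊗ f).
Proof. rewrite <- ten_comp, comp_id_l. reflexivity. Qed.
Lemma ten_post_l {A B D A' B'} (x : Hm B D) (f : Hm A B) (g : Hm A' B') :
  (x ∘ f) ⊗ g = (x ⊗ ι B') ∘ (f ⊗ g).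
Proof. rewrite <- ten_comp, comp_id_l. reflexivity. Qed.
Lemma ten_post_r {A B D A' B'} (f : Hm A B) (y : Hm B' D) (g : Hm A' B') :
  f ⊗ (y ∘ g) = (ι B ⊗ y) ∘ (f ⊗ g).
Proof. rewrite <- ten_comp, comp_id_l. reflexivity. Qed.
Lemma ten_split_lr {A B A' B'} (f : Hm A B) (g : Hm A' B') : f ⊗ g = (f ⊗ ι B') ∘ (ι A ⊗ g).
Proof. rewrite <- ten_comp, comp_id_l, comp_id_r. reflexivity. Qed.
Lemma ten_split_rl {A B A' B'} (f : Hm A B) (g : Hm A' B') : f ⊗ g = (ι B ⊗ g) ∘ (f ⊗ ι A').
Proof. rewrite <- ten_comp, comp_id_l, comp_id_r. reflexivity. Qed.
Lemma interchange {A B A' B'} (f : Hm A B) (g : Hm A' B') :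
  (ι B ⊗ g) ∘ (f ⊗ ι A') = (f ⊗ ι B') ∘ (ι A ⊗ g).
Proof. rewrite <- ten_split_lr, <- ten_split_rl. reflexivity. Qed.

Lemma ten_square_r {A B B' D D' F} (b : Hm B B') (x : Hm D' F) (y : Hm A D') (z : Hm D F)
  (w : Hm A D) : x ∘ y = z ∘ w -> (ι B' ⊗ x) ∘ (b ⊗ y) = (b ⊗ z) ∘ (ι B ⊗ w).
Proof. intro H. rewrite <- !ten_comp, comp_id_l, comp_id_r, H. reflexivity. Qed.
Lemma ten_square_l {A B B' D D' F} (b : Hm B B') (x : Hm D' F) (y : Hm A D') (z : Hm D F)
  (w : Hm A D) : x ∘ y = z ∘ w -> (x ⊗ ι B') ∘ (y ⊗ b) = (z ⊗ b) ∘ (w ⊗ ι B).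
Proof. intro H. rewrite <- !ten_comp, comp_id_l, comp_id_r, H. reflexivity. Qed.

(** Goals are kept in the normal form produced by [nf]: composites nested to the
    right, whiskerings [ι ⊗ -] and [- ⊗ ι] distributed over composites, and
    identities removed.  An equation [a₁ ∘ … ∘ aₙ = y] is then applied inside
    a longer chain [a₁ ∘ … ∘ aₙ ∘ k] through the lemmas [chainN]. *)

Lemma chain2 {A B D X} {a : Hm B D} {b : Hm A B} {y : Hm A D} :
  a ∘ b = y -> forall (k : Hm X A), a ∘ (b ∘ k) = y ∘ k.
Proof. intros H k. rewrite compA, H. reflexivity. Qed.
Lemma chain3 {A B D E X} {a : Hm D E} {b : Hm B D} {c : Hm A B} {y} :
  a ∘ b ∘ c = y -> forall (k : Hm X A), a ∘ (b ∘ (c ∘ k)) = y ∘ k.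
Proof. intros H k. rewrite <- H. rassoc. reflexivity. Qed.
Lemma chain4 {A B D E F X} {a : Hm E F} {b : Hm D E} {c : Hm B D} {d : Hm A B} {y} :
  a ∘ b ∘ c ∘ d = y -> forall (k : Hm X A), a ∘ (b ∘ (c ∘ (d ∘ k))) = y ∘ k.
Proof. intros H k. rewrite <- H. rassoc. reflexivity. Qed.
Lemma chain5 {A B D E F G X} {a : Hm F G} {b : Hm E F} {c : Hm D E} {d : Hm B D}
  {e : Hm A B} {y} :
  a ∘ b ∘ c ∘ d ∘ e = y -> forall (k : Hm X A), a ∘ (b ∘ (c ∘ (d ∘ (e ∘ k)))) = y ∘ k.
Proof. intros H k. rewrite <- H. rassoc. reflexivity. Qed.
Lemma chain6 {A B D E F G H' X} {a : Hm G H'} {b : Hm F G} {c : Hm E F} {d : Hm D E}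
  {e : Hm B D} {f : Hm A B} {y} :
  a ∘ b ∘ c ∘ d ∘ e ∘ f = y ->
  forall (k : Hm X A), a ∘ (b ∘ (c ∘ (d ∘ (e ∘ (f ∘ k))))) = y ∘ k.
Proof. intros H k. rewrite <- H. rassoc. reflexivity. Qed.
Lemma chain7 {A B D E F G H' I X} {a : Hm H' I} {b : Hm G H'} {c : Hm F G} {d : Hm E F}
  {e : Hm D E} {f : Hm B D} {g : Hm A B} {y} :
  a ∘ b ∘ c ∘ d ∘ e ∘ f ∘ g = y ->
  forall (k : Hm X A), a ∘ (b ∘ (c ∘ (d ∘ (e ∘ (f ∘ (g ∘ k)))))) = y ∘ k.
Proof. intros H k. rewrite <- H. rassoc. reflexivity. Qed.

Ltac nf1 := match goal with
  | |- context [ tenm (cmp ?g ?f) (idm ?X) ] => rewrite (@ten_comp_l _ _ _ X g f)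
  | |- context [ tenm (idm ?X) (cmp ?g ?f) ] => rewrite (@ten_comp_r _ _ _ X g f)
  | |- context [ tenm (idm ?A) (idm ?B) ] => rewrite (ten_id A B)
  | |- context [ cmp (idm ?B) ?f ] => rewrite (comp_id_l f)
  | |- context [ cmp ?f (idm ?A) ] => rewrite (comp_id_r f)
  | |- context [ cmp (cmp ?h ?g) ?f ] => rewrite <- (compA h g f)
  end.
Ltac nf := repeat nf1.

(** [rw H] rewrites with the chain equation [H] left to right anywhere in the
    goal (also under binders), then renormalises; [rwr H] uses it right to left. *)
Ltac rw0 H := first [
    rewrite (chain7 H) | rewrite (chain6 H) | rewrite (chain5 H) | rewrite (chain4 H)
  | rewrite (chain3 H) | rewrite (chain2 H) | rewrite H
  | setoid_rewrite (chain7 H) | setoid_rewrite (chain6 H) | setoid_rewrite (chain5 H)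
  | setoid_rewrite (chain4 H) | setoid_rewrite (chain3 H) | setoid_rewrite (chain2 H)
  | setoid_rewrite H ]; nf.
Tactic Notation "rw" uconstr(H) := rw0 H.
Tactic Notation "rwr" uconstr(H) := rw0 uconstr:(eq_sym H).

Lemma whisk_l2 {A B D X} {x : Hm B D} {y : Hm A B} {z} :
  x ∘ y = z -> (ι X ⊗ x) ∘ (ι X ⊗ y) = ι X ⊗ z.
Proof. intro H. rewrite <- ten_comp_r, H. reflexivity. Qed.
Lemma whisk_r2 {A B D X} {x : Hm B D} {y : Hm A B} {z} :
  x ∘ y = z -> (x ⊗ ι X) ∘ (y ⊗ ι X) = z ⊗ ι X.
Proof. intro H. rewrite <- ten_comp_l, H. reflexivity. Qed.
Lemma whisk_l4 {A B D E F X} {x : Hm E F} {x0 : Hm D E} {y : Hm B D} {w : Hm A B} {z} :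
  x ∘ x0 ∘ y ∘ w = z -> (ι X ⊗ x) ∘ (ι X ⊗ x0) ∘ (ι X ⊗ y) ∘ (ι X ⊗ w) = ι X ⊗ z.
Proof. intro H. rewrite <- H. nf. reflexivity. Qed.
Lemma whisk_l5 {A B D E F G X} {x1 : Hm F G} {x : Hm E F} {x0 : Hm D E} {y : Hm B D}
  {w : Hm A B} {z} : x1 ∘ x ∘ x0 ∘ y ∘ w = z ->
  (ι X ⊗ x1) ∘ (ι X ⊗ x) ∘ (ι X ⊗ x0) ∘ (ι X ⊗ y) ∘ (ι X ⊗ w) = ι X ⊗ z.
Proof. intro H. rewrite <- H. nf. reflexivity. Qed.

Lemma asc_asci A B D : asc A B D ∘ asci A B D = ι _. Proof. exact (asc_iso1 HC A B D). Qed.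
Lemma asci_asc A B D : asci A B D ∘ asc A B D = ι _. Proof. exact (asc_iso2 HC A B D). Qed.
Lemma lu_lui A : lu A ∘ lui A = ι _. Proof. exact (lu_iso1 HC A). Qed.
Lemma lui_lu A : lui A ∘ lu A = ι _. Proof. exact (lu_iso2 HC A). Qed.
Lemma ru_rui A : ru A ∘ rui A = ι _. Proof. exact (ru_iso1 HC A). Qed.
Lemma rui_ru A : rui A ∘ ru A = ι _. Proof. exact (ru_iso2 HC A). Qed.
Lemma sym_sym A B : sym B A ∘ sym A B = ι _. Proof. exact (sym_inv HC A B). Qed.

Lemma cancel_pair {A B X} {x : Hm B A} {y : Hm A B} :
  x ∘ y = ι A -> forall (k : Hm X A), x ∘ (y ∘ k) = k.
Proof. intros H k. rewrite compA, H, comp_id_l. reflexivity. Qed.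
Lemma cancel_ten_l {A B Z} {x : Hm B A} {y : Hm A B} :
  x ∘ y = ι A -> (x ⊗ ι Z) ∘ (y ⊗ ι Z) = ι _.
Proof. intros H. rewrite <- ten_comp_l, H, ten_id. reflexivity. Qed.
Lemma cancel_ten_r {A B Z} {x : Hm B A} {y : Hm A B} :
  x ∘ y = ι A -> (ι Z ⊗ x) ∘ (ι Z ⊗ y) = ι _.
Proof. intros H. rewrite <- ten_comp_r, H, ten_id. reflexivity. Qed.

(** [cancel] deletes adjacent mutually inverse (whiskered) coherence isomorphisms. *)
Ltac inverse_proof x y :=
  lazymatch x with
  | asc ?A ?B ?D => lazymatch y with asci A B D => constr:(asc_asci A B D) end
  | asci ?A ?B ?D => lazymatch y with asc A B D => constr:(asci_asc A B D) end
  | lu ?A => lazymatch y with lui A => constr:(lu_lui A) end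
  | lui ?A => lazymatch y with lu A => constr:(lui_lu A) end
  | ru ?A => lazymatch y with rui A => constr:(ru_rui A) end
  | rui ?A => lazymatch y with ru A => constr:(rui_ru A) end
  | sym ?A ?B => lazymatch y with sym B A => constr:(sym_sym B A) end
  | tenm (idm ?Z) ?x' => lazymatch y with tenm (idm Z) ?y' =>
       let p := inverse_proof x' y' in constr:(@cancel_ten_r _ _ Z _ _ p) end
  | tenm ?x' (idm ?Z) => lazymatch y with tenm ?y' (idm Z) =>
       let p := inverse_proof x' y' in constr:(@cancel_ten_l _ _ Z _ _ p) end
  end.
Ltac cancel1 := match goal with
  | |- context [ cmp ?x (cmp ?y ?k) ] => let p := inverse_proof x y in rewrite (cancel_pair p k)
  | |- context [ cmp ?x ?y ] => let p := inverse_proof x y in rewrite p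
  | |- context [ cmp (idm ?B) ?f ] => rewrite (comp_id_l f)
  | |- context [ cmp ?f (idm ?A) ] => rewrite (comp_id_r f)
  end.
Ltac cancel := repeat cancel1.

Lemma iso_cancel_r {A B D} (i : Hm A B) (j : Hm B A) (x y : Hm B D) :
  i ∘ j = ι _ -> x ∘ i = y ∘ i -> x = y.
Proof. intros H E. rewrite <- (comp_id_r x), <- (comp_id_r y), <- H, !compA, E. reflexivity. Qed.
Lemma iso_cancel_l {A B D} (i : Hm A B) (j : Hm B A) (x y : Hm D A) :
  j ∘ i = ι _ -> i ∘ x = i ∘ y -> x = y.
Proof. intros H E. rewrite <- (comp_id_l x), <- (comp_id_l y), <- H, <- !compA, E. reflexivity. Qed.

Lemma nat_asc {A A' B B' D D'} (f : Hm A A') (g : Hm B B') (h : Hm D D') :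
  asc A' B' D' ∘ ((f ⊗ g) ⊗ h) = (f ⊗ (g ⊗ h)) ∘ asc A B D.
Proof. exact (asc_nat HC f g h). Qed.
Lemma nat_asci {A A' B B' D D'} (f : Hm A A') (g : Hm B B') (h : Hm D D') :
  asci A' B' D' ∘ (f ⊗ (g ⊗ h)) = ((f ⊗ g) ⊗ h) ∘ asci A B D.
Proof.
  apply (iso_cancel_r (asc _ _ _) (asci _ _ _)); [apply asc_asci|].
  rassoc. setoid_rewrite asci_asc. rewrite comp_id_r, <- nat_asc. rassoc. cancel. reflexivity.
Qed.
Lemma nat_lu {A B} (f : Hm A B) : lu B ∘ (ι _ ⊗ f) = f ∘ lu A.
Proof. exact (lu_nat HC f). Qed.
Lemma nat_ru {A B} (f : Hm A B) : ru B ∘ (f ⊗ ι _) = f ∘ ru A.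
Proof. exact (ru_nat HC f). Qed.
Lemma nat_rui {A B} (f : Hm A B) : rui B ∘ f = (f ⊗ ι _) ∘ rui A.
Proof.
  apply (iso_cancel_r (ru _) (rui _)); [apply ru_rui|].
  rassoc. setoid_rewrite rui_ru. rewrite comp_id_r, <- nat_ru. rassoc. cancel. reflexivity.
Qed.
Lemma nat_sym {A A' B B'} (f : Hm A A') (g : Hm B B') :
  sym A' B' ∘ (f ⊗ g) = (g ⊗ f) ∘ sym A B.
Proof. exact (sym_nat HC f g). Qed.

Lemma nat_asc_l {A A' B D} (f : Hm A A') :
  asc A' B D ∘ ((f ⊗ ι B) ⊗ ι D) = (f ⊗ ι _) ∘ asc A B D.
Proof. rewrite nat_asc, ten_id. reflexivity. Qed.
Lemma nat_asc_m {A B B' D} (g : Hm B B') :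
  asc A B' D ∘ ((ι A ⊗ g) ⊗ ι D) = (ι A ⊗ (g ⊗ ι D)) ∘ asc A B D.
Proof. rewrite nat_asc. reflexivity. Qed.
Lemma nat_asc_r {A B D D'} (h : Hm D D') :
  asc A B D' ∘ (ι _ ⊗ h) = (ι A ⊗ (ι B ⊗ h)) ∘ asc A B D.
Proof. rewrite <- ten_id, nat_asc. reflexivity. Qed.
Lemma nat_asci_l {A A' B D} (f : Hm A A') :
  asci A' B D ∘ (f ⊗ ι _) = ((f ⊗ ι B) ⊗ ι D) ∘ asci A B D.
Proof. rewrite <- ten_id, nat_asci. reflexivity. Qed.
Lemma nat_asci_m {A B B' D} (g : Hm B B') :
  asci A B' D ∘ (ι A ⊗ (g ⊗ ι D)) = ((ι A ⊗ g) ⊗ ι D) ∘ asci A B D.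
Proof. rewrite nat_asci. reflexivity. Qed.
Lemma nat_asci_r {A B D D'} (h : Hm D D') :
  asci A B D' ∘ (ι A ⊗ (ι B ⊗ h)) = (ι _ ⊗ h) ∘ asci A B D.
Proof. rewrite nat_asci, ten_id. reflexivity. Qed.

Lemma pentagon_eq A B D E : asc A B (ten D E) ∘ asc (ten A B) D E =
  (ι A ⊗ asc B D E) ∘ asc A (ten B D) E ∘ (asc A B D ⊗ ι E).
Proof. exact (pentagon HC A B D E). Qed.
Lemma triangle_eq A B : (ι A ⊗ lu B) ∘ asc A unt B = ru A ⊗ ι B.
Proof. exact (triangle HC A B). Qed.
Lemma hexagon_eq A B D : (ι B ⊗ sym A D) ∘ asc B A D ∘ (sym A B ⊗ ι D) =
  asc B D A ∘ sym A (ten B D) ∘ asc A B D.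
Proof. exact (hexagon HC A B D). Qed.
Lemma triangle_inv A B : (ru A ⊗ ι B) ∘ asci A unt B = ι A ⊗ lu B.
Proof. rewrite <- triangle_eq. rassoc. cancel. reflexivity. Qed.

(** Tensoring with the unit is faithful (the unitors are isomorphisms). *)
Lemma ten_unit_r_inj {A B} (f g : Hm A B) : f ⊗ ι unt = g ⊗ ι unt -> f = g.
Proof.
  intro H. apply (iso_cancel_r (ru A) (rui A)); [apply ru_rui|]. rewrite <- !nat_ru, H. reflexivity.
Qed.
Lemma ten_unit_l_inj {A B} (f g : Hm A B) : ι unt ⊗ f = ι unt ⊗ g -> f = g.
Proof.
  intro H. apply (iso_cancel_r (lu A) (lui A)); [apply lu_lui|]. rewrite <- !nat_lu, H. reflexivity.
Qed.

Lemma kelly_r A B : (ι A ⊗ ru B) ∘ asc A B unt = ru (ten A B).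
Proof.
  apply ten_unit_r_inj. apply (iso_cancel_l (asc A B unt) (asci A B unt)); [apply asci_asc|].
  rewrite <- (triangle_eq (ten A B) unt). nf. rw (nat_asc_r (lu (@unt C))).
  rw (pentagon_eq A B unt unt). rw (whisk_l2 (triangle_eq B unt)). rw (nat_asc_m (ru B)).
  reflexivity.
Qed.

Lemma kelly_l A B : lu (ten A B) ∘ asc unt A B = lu A ⊗ ι B.
Proof.
  apply ten_unit_l_inj.
  apply (iso_cancel_r (asc unt (ten unt A) B ∘ (asc unt unt A ⊗ ι B))
           ((asci unt unt A ⊗ ι B) ∘ asci unt (ten unt A) B)); [nf; cancel; reflexivity|].
  nf. rwr (pentagon_eq unt unt A B). rw (triangle_eq unt (ten A B)).
  rwr (nat_asc_l (ru (@unt C))). rwr (nat_asc_m (lu A)). rw (whisk_r2 (triangle_eq unt A)).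
  reflexivity.
Qed.

Lemma kelly_l_inv A B : (lu A ⊗ ι B) ∘ asci unt A B = lu (ten A B).
Proof. rewrite <- kelly_l. rassoc. cancel. reflexivity. Qed.
Lemma kelly_r_inv A B : asci A B unt ∘ (ι A ⊗ rui B) = rui (ten A B).
Proof.
  apply (iso_cancel_l (ru (ten A B)) (rui (ten A B))); [apply rui_ru|].
  rewrite <- (kelly_r A B) at 1. rassoc. cancel. reflexivity.
Qed.

Lemma lu_ten_unt A : lu (ten unt A) = ι unt ⊗ lu A.
Proof. apply (iso_cancel_l (lu A) (lui A)); [apply lui_lu|]. rewrite nat_lu. reflexivity. Qed.

Lemma lu_ru_unt : lu (@unt C) = ru (@unt C).
Proof. apply ten_unit_r_inj. rewrite <- kelly_l, <- triangle_eq, lu_ten_unt. reflexivity. Qed.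

Lemma lu_sym A : lu A ∘ sym A unt = ru A.
Proof.
  apply ten_unit_r_inj. apply (iso_cancel_l (sym A unt) (sym unt A)); [apply sym_sym|].
  nf. rwr (kelly_l A unt). rwr (nat_lu (sym A unt)). rw (hexagon_eq A unt unt).
  rw (kelly_l unt A). rwr (nat_sym (ι A) (lu (@unt C))). rw (triangle_eq A unt). reflexivity.
Qed.
Lemma ru_sym A : ru A ∘ sym unt A = lu A.
Proof. rewrite <- lu_sym. rassoc. cancel. reflexivity. Qed.

(** The two unit-absorbing composites through [sym] that occur inside [θ]. *)
Lemma lu_ten_via_sym B E :
  (ι B ⊗ lu E) ∘ asc B unt E ∘ (sym unt B ⊗ ι E) ∘ asci unt B E = lu (ten B E).
Proof. rw (triangle_eq B E). rw (whisk_r2 (ru_sym B)). apply kelly_l_inv. Qed.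
Lemma lu_ru_via_sym E :
  lu E ∘ (ι _ ⊗ ru E) ∘ asc unt E unt ∘ (sym E unt ⊗ ι _) ∘ asci E unt unt
  = ru E ∘ (ι E ⊗ lu unt).
Proof.
  rw (nat_lu (ru E)). rw (kelly_l E unt). rw (whisk_r2 (lu_sym E)). rw (triangle_inv E unt).
  reflexivity.
Qed.

(** Hexagon solved for the symmetry with a composite object. *)
Lemma sym_ten_r A B D : sym A (ten B D) =
  asci B D A ∘ (ι B ⊗ sym A D) ∘ asc B A D ∘ (sym A B ⊗ ι D) ∘ asci A B D.
Proof. rw (hexagon_eq A B D). cancel. reflexivity. Qed.
Lemma sym_ten_l A B D : sym (ten A B) D =
  asc D A B ∘ (sym A D ⊗ ι B) ∘ asci A D B ∘ (ι A ⊗ sym B D) ∘ asc A B D.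
Proof.
  apply (iso_cancel_r (sym D (ten A B)) (sym (ten A B) D)); [apply sym_sym|].
  rewrite sym_sym, sym_ten_r. rassoc. cancel. reflexivity.
Qed.

(** ** A coherence solver for associator diagrams

    For an object [T] and a "tail" [Z], [canon T Z : T ⊗ Z -> N] is the
    composite of associators that brings [T ⊗ Z] to fully right-nested form.
    If a morphism [P : X -> Y] is built from (whiskered) associators and
    their inverses, then [canon Y I ∘ (P ⊗ ι I) = canon X I], by induction on
    [P] using the pentagon and naturality ([canon_asc], [canon_asci], ...).
    Since [canon Y I] is invertible and [- ⊗ ι I] is faithful, any two such
    parallel [P], [Q] are equal; the tactic [acoh] carries this out. *)

Lemma canon_asc {L M N Z W W' V} (cn : Hm (ten N Z) W) (cm : Hm (ten M W) W')
  (cl : Hm (ten L W') V) :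
  (cl ∘ (ι L ⊗ (cm ∘ (ι M ⊗ cn) ∘ asc M N Z)) ∘ asc L (ten M N) Z) ∘ (asc L M N ⊗ ι Z)
  = (cl ∘ (ι L ⊗ cm) ∘ asc L M W) ∘ (ι (ten L M) ⊗ cn) ∘ asc (ten L M) N Z.
Proof.
  apply eq_by_precomp; intros X k. nf. rw (nat_asc_r cn). rw (pentagon_eq L M N Z). reflexivity.
Qed.
Lemma canon_asci {L M N Z W W' V} (cn : Hm (ten N Z) W) (cm : Hm (ten M W) W')
  (cl : Hm (ten L W') V) :
  ((cl ∘ (ι L ⊗ cm) ∘ asc L M W) ∘ (ι (ten L M) ⊗ cn) ∘ asc (ten L M) N Z) ∘ (asci L M N ⊗ ι Z)
  = cl ∘ (ι L ⊗ (cm ∘ (ι M ⊗ cn) ∘ asc M N Z)) ∘ asc L (ten M N) Z.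
Proof. rewrite <- canon_asc, <- compA, <- ten_comp_l, asc_asci, ten_id, comp_id_r. reflexivity. Qed.
Lemma canon_left {L L' R Z W V} (x : Hm L L') (cr : Hm (ten R Z) W) (c1 : Hm (ten L W) V)
  (c2 : Hm (ten L' W) V) : c2 ∘ (x ⊗ ι W) = c1 ->
  (c2 ∘ (ι L' ⊗ cr) ∘ asc L' R Z) ∘ ((x ⊗ ι R) ⊗ ι Z) = c1 ∘ (ι L ⊗ cr) ∘ asc L R Z.
Proof.
  intro H. rewrite <- H. apply eq_by_precomp; intros X k. nf.
  rw (nat_asc_l x). rwr (interchange x cr). reflexivity.
Qed.
Lemma canon_right {L R R' Z W V} (y : Hm R R') (cl : Hm (ten L W) V) (c1 : Hm (ten R Z) W)
  (c2 : Hm (ten R' Z) W) : c2 ∘ (y ⊗ ι Z) = c1 ->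
  (cl ∘ (ι L ⊗ c2) ∘ asc L R' Z) ∘ ((ι L ⊗ y) ⊗ ι Z) = cl ∘ (ι L ⊗ c1) ∘ asc L R Z.
Proof.
  intro H. rewrite <- H. apply eq_by_precomp; intros X k. nf. rw (nat_asc_m y). reflexivity.
Qed.
Lemma canon_id {T Z V} (c : Hm (ten T Z) V) : c ∘ (ι T ⊗ ι Z) = c.
Proof. rewrite ten_id, comp_id_r. reflexivity. Qed.
Lemma canon_comp {X1 X2 X3 Z V} (s1 : Hm X2 X3) (s2 : Hm X1 X2) (c3 : Hm (ten X3 Z) V) c2 c1 :
  c3 ∘ (s1 ⊗ ι Z) = c2 -> c2 ∘ (s2 ⊗ ι Z) = c1 -> c3 ∘ ((s1 ∘ s2) ⊗ ι Z) = c1.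
Proof. intros H1 H2. rewrite ten_comp_l, compA, H1, H2. reflexivity. Qed.
Lemma eq_by_canon {X Y V} (P Q : Hm X Y) (c : Hm (ten Y unt) V) (j : Hm V (ten Y unt))
  (d : Hm (ten X unt) V) : j ∘ c = ι _ -> c ∘ (P ⊗ ι unt) = d -> c ∘ (Q ⊗ ι unt) = d -> P = Q.
Proof.
  intros Hj HP HQ. apply ten_unit_r_inj. apply (iso_cancel_l c j); [exact Hj|].
  rewrite HP, HQ. reflexivity.
Qed.

Ltac canon T Z :=
  lazymatch T with
  | ten ?L ?R => let cr := canon R Z in
      lazymatch type of cr with Hom _ _ ?W =>
        let cl := canon L W in constr:(cl ∘ (ι L ⊗ cr) ∘ asc L R Z) end
  | _ => constr:(@idm C (ten T Z))
  end.
Ltac canon_inv T Z :=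
  lazymatch T with
  | ten ?L ?R => let cr := canon R Z in let ir := canon_inv R Z in
      lazymatch type of cr with Hom _ _ ?W =>
        let il := canon_inv L W in constr:(asci L R Z ∘ (ι L ⊗ ir) ∘ il) end
  | _ => constr:(@idm C (ten T Z))
  end.
Ltac solve_step :=
  lazymatch goal with
  | |- cmp _ (tenm (asc _ _ _) (idm _)) = _ => apply canon_asc
  | |- cmp _ (tenm (asci _ _ _) (idm _)) = _ => apply canon_asci
  | |- cmp _ (tenm (idm _) (idm _)) = _ => apply canon_id
  | |- cmp _ (tenm (tenm (idm _) _) (idm _)) = _ => apply canon_right; solve_step
  | |- cmp _ (tenm (tenm _ (idm _)) (idm _)) = _ => apply canon_left; solve_step
  end.
Ltac solve_path :=
  lazymatch goal with
  | |- cmp _ (tenm (cmp _ _) (idm _)) = _ => eapply canon_comp; [solve_step | solve_path]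
  | |- _ => solve_step
  end.
Ltac acoh :=
  lazymatch goal with |- @eq (Hom _ ?X ?Y) ?P ?Q =>
    let c := canon Y (@unt C) in let j := canon_inv Y (@unt C) in
    eapply (eq_by_canon P Q c j); [nf; cancel; reflexivity | solve_path | solve_path]
  end.

(** ** The middle-four interchange [θ]

    It is what makes
    the tensor of Aux(C) land in the right auxiliary object; each monoidal
    axiom of Aux(C) needs one of the identities below. *)

Lemma theta_unfold B E B' E' : th B E B' E' = asci B B' (ten E E') ∘ (ι B ⊗ asc B' E E') ∘
  (ι B ⊗ (sym E B' ⊗ ι E')) ∘ (ι B ⊗ asci E B' E') ∘ asc B E (ten B' E').
Proof. reflexivity. Qed.

Lemma theta_involutive B E B' E' : th B B' E E' ∘ th B E B' E' = ι _.
Proof. rewrite !theta_unfold. rassoc. cancel. reflexivity. Qed.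

Lemma theta_nat {B1 B2 E1 E2 B1' B2' E1' E2'} (b : Hm B1 B2) (e : Hm E1 E2) (b' : Hm B1' B2')
  (e' : Hm E1' E2') :
  th B2 E2 B2' E2' ∘ ((b ⊗ e) ⊗ (b' ⊗ e')) = ((b ⊗ b') ⊗ (e ⊗ e')) ∘ th B1 E1 B1' E1'.
Proof.
  apply eq_by_precomp; intros X k. rewrite !theta_unfold. rassoc.
  rw (nat_asc b e (b' ⊗ e')).
  rw (ten_square_r b _ _ _ _ (nat_asci e b' e')).
  rw (ten_square_r b _ _ _ _ (ten_square_l e' _ _ _ _ (nat_sym e b'))).
  rw (ten_square_r b _ _ _ _ (nat_asc b' e e')).
  rw (nat_asci b b' (e ⊗ e')). reflexivity.
Qed.
Lemma theta_nat_l {B E E' B' F} (h : Hm E E') :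
  th B E' B' F ∘ ((ι B ⊗ h) ⊗ ι (ten B' F)) = (ι (ten B B') ⊗ (h ⊗ ι F)) ∘ th B E B' F.
Proof. pose proof (theta_nat (ι B) h (ι B') (ι F)) as H. rewrite !ten_id in H. exact H. Qed.
Lemma theta_nat_r {B E B' F F'} (h : Hm F F') :
  th B E B' F' ∘ (ι (ten B E) ⊗ (ι B' ⊗ h)) = (ι (ten B B') ⊗ (ι E ⊗ h)) ∘ th B E B' F.
Proof. pose proof (theta_nat (ι B) (ι E) (ι B') h) as H. rewrite !ten_id in H. exact H. Qed.

Lemma theta_rui A B : (ι _ ⊗ lu unt) ∘ th A unt B unt ∘ (rui A ⊗ rui B) = rui (ten A B).
Proof.
  rewrite theta_unfold, (ten_split_lr (rui A)). rassoc. rwr (nat_asci_r (lu (@unt C))).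
  rw (whisk_l4 (lu_ten_via_sym B unt)). rw (triangle_eq A (ten B unt)). cancel.
  apply kelly_r_inv.
Qed.
Lemma theta_lu B E :
  (ι B ⊗ lu E) ∘ (lu B ⊗ ι _) ∘ th unt unt B E ∘ (rui unt ⊗ ι _) = lu (ten B E).
Proof.
  rewrite theta_unfold. rassoc. rw (interchange (lu B) (lu E)). rwr (nat_asci_r (lu E)).
  rw (kelly_l_inv B E). rw (whisk_l4 (lu_ten_via_sym B E)). rw (triangle_eq unt (ten B E)).
  cancel. reflexivity.
Qed.
Lemma theta_ru B E :
  (ι B ⊗ ru E) ∘ (ru B ⊗ ι _) ∘ th B E unt unt ∘ (ι _ ⊗ rui unt) = ru (ten B E).
Proof.
  rewrite theta_unfold. rassoc. rw (interchange (ru B) (ru E)). rwr (nat_asci_r (ru E)).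
  rw (triangle_inv B E). rw (whisk_l5 (lu_ru_via_sym E)). nf.
  rwr (nat_asc_r (lu (@unt C))). rw (kelly_r B E). rewrite lu_ru_unt. cancel. reflexivity.
Qed.

Lemma pentagon_inv A B D E :
  asc (ten A B) D E ∘ (asci A B D ⊗ ι E) ∘ asci A (ten B D) E ∘ (ι A ⊗ asci B D E)
  = asci A B (ten D E).
Proof. acoh. Qed.

Lemma theta_sym B E B' E' : (ι _ ⊗ sym E E') ∘ (sym B B' ⊗ ι _) ∘ th B E B' E' =
  th B' E' B E ∘ sym (ten B E) (ten B' E').
Proof.
  apply eq_by_precomp; intros X k. symmetry.
  rewrite !theta_unfold, (sym_ten_l B E (ten B' E')). rassoc. nf.
  rewrite (sym_ten_r B B' E'), (sym_ten_r E B' E'). nf.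
  rw (pentagon_eq B' E' B E). cancel.
  rw (nat_asc_m (sym B E')). cancel.
  rwr (pentagon_eq B' B E' E). cancel.
  rw (nat_asc_l (sym B B')).
  rw (pentagon_inv B B' E' E).
  rw (nat_asci_r (sym E E')). rwr (interchange (sym B B') (sym E E')). reflexivity.
Qed.

(** Both sides of [theta_assoc] are brought to the common normal form
    [shuffle3], a composite of whiskered associators and three whiskered
    symmetries.  Along the way a symmetry has to be moved through a block of
    associators: the [slide_*] lemmas are the naturality of such blocks in
    the object [T] (the suffix records the tensor pattern around [x]). *)

Definition shuffle3 A B D E F G :
  Hm (ten (ten (ten A E) (ten B F)) (ten D G)) (ten (ten A (ten B D)) (ten E (ten F G))) :=
  (asci A (ten B D) (ten E (ten F G)) ∘ (ι A ⊗ asci B D (ten E (ten F G)))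
     ∘ (ι A ⊗ (ι B ⊗ asc D E (ten F G))))
  ∘ (ι A ⊗ (ι B ⊗ (sym E D ⊗ ι (ten F G))))
  ∘ ((ι A ⊗ (ι B ⊗ asci E D (ten F G))) ∘ (ι A ⊗ (ι B ⊗ (ι E ⊗ asc D F G)))
     ∘ (ι A ⊗ asc B E (ten (ten D F) G)))
  ∘ (ι A ⊗ (ι (ten B E) ⊗ (sym F D ⊗ ι G)))
  ∘ (ι A ⊗ (sym E B ⊗ ι (ten (ten F D) G)))
  ∘ ((ι A ⊗ (ι (ten E B) ⊗ asci F D G)) ∘ (ι A ⊗ asc (ten E B) F (ten D G))
     ∘ asc A (ten (ten E B) F) (ten D G)
     ∘ ((ι A ⊗ asci E B F) ⊗ ι (ten D G)) ∘ (asc A E (ten B F) ⊗ ι (ten D G))).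

Lemma slide_xF {T T'} (x : Hm T T') A F D G :
  (ι A ⊗ (ι T' ⊗ asci F D G)) ∘ (ι A ⊗ asc T' F (ten D G)) ∘ asc A (ten T' F) (ten D G)
    ∘ ((ι A ⊗ (x ⊗ ι F)) ⊗ ι (ten D G))
  = (ι A ⊗ (x ⊗ ι (ten (ten F D) G))) ∘ (ι A ⊗ (ι T ⊗ asci F D G))
    ∘ (ι A ⊗ asc T F (ten D G)) ∘ asc A (ten T F) (ten D G).
Proof.
  apply eq_by_precomp; intros X k. nf. rw (nat_asc_m (x ⊗ ι F)). rw (whisk_l2 (nat_asc_l x)).
  rw (whisk_l2 (interchange x (asci F D G))). reflexivity.
Qed.
Lemma slide_Ex {T T'} (x : Hm T T') A B E G :
  (ι (ten A B) ⊗ ((ι E ⊗ x) ⊗ ι G)) ∘ (ι (ten A B) ⊗ asci E T G) ∘ asc (ten A B) E (ten T G)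
    ∘ (asci A B E ⊗ ι (ten T G)) ∘ asci A (ten B E) (ten T G)
  = (ι (ten A B) ⊗ asci E T' G) ∘ asc (ten A B) E (ten T' G) ∘ (asci A B E ⊗ ι (ten T' G))
    ∘ asci A (ten B E) (ten T' G) ∘ (ι A ⊗ (ι (ten B E) ⊗ (x ⊗ ι G))).
Proof.
  apply eq_by_precomp; intros X k. nf. rw (whisk_l2 (eq_sym (nat_asci_m x))).
  rwr (nat_asc_r (x ⊗ ι G)). rw (interchange (asci A B E) (x ⊗ ι G)).
  rwr (nat_asci_r (x ⊗ ι G)). reflexivity.
Qed.
Lemma slide_xFG {T T'} (x : Hm T T') A B F G :
  (ι (ten A B) ⊗ ((x ⊗ ι F) ⊗ ι G)) ∘ (ι (ten A B) ⊗ asci T F G) ∘ asci A B (ten T (ten F G))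
  = (ι (ten A B) ⊗ asci T' F G) ∘ asci A B (ten T' (ten F G))
    ∘ (ι A ⊗ (ι B ⊗ (x ⊗ ι (ten F G)))).
Proof.
  apply eq_by_precomp; intros X k. nf. rw (whisk_l2 (eq_sym (nat_asci_l x))).
  rwr (nat_asci_r (x ⊗ ι (ten F G))). reflexivity.
Qed.
Lemma slide_xG {T T'} (x : Hm T T') A E B G :
  (ι A ⊗ (ι (ten E B) ⊗ (x ⊗ ι G))) ∘ (ι A ⊗ asci E B (ten T G)) ∘ asc A E (ten B (ten T G))
  = (ι A ⊗ asci E B (ten T' G)) ∘ asc A E (ten B (ten T' G)) ∘ (ι (ten A E) ⊗ (ι B ⊗ (x ⊗ ι G))).
Proof.
  apply eq_by_precomp; intros X k. nf. rw (whisk_l2 (eq_sym (nat_asci_r (x ⊗ ι G)))).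
  rwr (nat_asc_r (ι B ⊗ (x ⊗ ι G))). reflexivity.
Qed.
Lemma slide_xD {T T'} (x : Hm T T') A D F G :
  (ι A ⊗ ((x ⊗ ι D) ⊗ ι (ten F G))) ∘ (ι A ⊗ asci T D (ten F G)) ∘ (ι A ⊗ (ι T ⊗ asc D F G))
  = (ι A ⊗ asci T' D (ten F G)) ∘ (ι A ⊗ (ι T' ⊗ asc D F G)) ∘ (ι A ⊗ (x ⊗ ι (ten (ten D F) G))).
Proof.
  apply eq_by_precomp; intros X k. nf. rw (whisk_l2 (eq_sym (nat_asci_l x))).
  rw (whisk_l2 (eq_sym (interchange x (asc D F G)))). reflexivity.
Qed.
Lemma slide_Bx {T T'} (x : Hm T T') A B F G :
  (ι A ⊗ ((ι B ⊗ x) ⊗ ι (ten F G))) ∘ (ι A ⊗ asci B T (ten F G))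
  = (ι A ⊗ asci B T' (ten F G)) ∘ (ι A ⊗ (ι B ⊗ (x ⊗ ι (ten F G)))).
Proof.
  apply eq_by_precomp; intros X k. nf. rw (whisk_l2 (eq_sym (nat_asci_m x))). reflexivity.
Qed.

(** The left-hand side of the associativity law equals [shuffle3]; the
    asserted equations are pure associator coherences. *)
Lemma theta_assoc_left A B D E F G :
  (ι _ ⊗ asc E F G) ∘ (asc A B D ⊗ ι _) ∘ th (ten A B) (ten E F) D G ∘ (th A E B F ⊗ ι _)
  = shuffle3 A B D E F G.
Proof.
  unfold shuffle3. apply eq_by_precomp; intros X k. rewrite !theta_unfold, (sym_ten_l E F D). nf.
  rwr (slide_xF (sym E B) A F D G).
  assert (coh1 : (ι A ⊗ (ι B ⊗ asci E D (ten F G))) ∘ (ι A ⊗ (ι B ⊗ (ι E ⊗ asc D F G)))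
      ∘ (ι A ⊗ asc B E (ten (ten D F) G))
    = asc A B (ten (ten E D) (ten F G)) ∘ (ι (ten A B) ⊗ asc (ten E D) F G)
      ∘ (ι (ten A B) ⊗ (asci E D F ⊗ ι G)) ∘ (ι (ten A B) ⊗ asci E (ten D F) G)
      ∘ asc (ten A B) E (ten (ten D F) G) ∘ (asci A B E ⊗ ι (ten (ten D F) G))
      ∘ asci A (ten B E) (ten (ten D F) G)) by acoh.
  rw coh1. rwr (slide_Ex (sym F D) A B E G).
  assert (coh2 : (ι (ten A B) ⊗ asci E (ten F D) G) ∘ asc (ten A B) E (ten (ten F D) G)
      ∘ (asci A B E ⊗ ι (ten (ten F D) G)) ∘ asci A (ten B E) (ten (ten F D) G)
      ∘ (ι A ⊗ (ι (ten B E) ⊗ asci F D G)) ∘ (ι A ⊗ asc (ten B E) F (ten D G))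
      ∘ asc A (ten (ten B E) F) (ten D G)
    = (ι (ten A B) ⊗ (asc E F D ⊗ ι G)) ∘ (ι (ten A B) ⊗ asci (ten E F) D G)
      ∘ asc (ten A B) (ten E F) (ten D G) ∘ (asci A B (ten E F) ⊗ ι (ten D G))
      ∘ ((ι A ⊗ asc B E F) ⊗ ι (ten D G))) by acoh.
  rw coh2.
  assert (coh3 : asci A (ten B D) (ten E (ten F G)) ∘ (ι A ⊗ asci B D (ten E (ten F G)))
      ∘ (ι A ⊗ (ι B ⊗ asc D E (ten F G)))
    = (ι (ten A (ten B D)) ⊗ asc E F G) ∘ (asc A B D ⊗ ι (ten (ten E F) G))
      ∘ asci (ten A B) D (ten (ten E F) G) ∘ (ι (ten A B) ⊗ asc D (ten E F) G)
      ∘ (ι (ten A B) ⊗ (asc D E F ⊗ ι G)) ∘ (ι (ten A B) ⊗ asci (ten D E) F G)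
      ∘ asci A B (ten (ten D E) (ten F G))) by acoh.
  rw coh3. rwr (slide_xFG (sym E D) A B F G). cancel. reflexivity.
Qed.

Lemma theta_assoc_right A B D E F G :
  th A E (ten B D) (ten F G) ∘ (ι _ ⊗ th B F D G) ∘ asc (ten A E) (ten B F) (ten D G)
  = shuffle3 A B D E F G.
Proof.
  unfold shuffle3. apply eq_by_precomp; intros X k. rewrite !theta_unfold, (sym_ten_r E B D). nf.
  rw (whisk_l2 (interchange (sym E B) (sym F D ⊗ ι G))).
  assert (coh1 : (ι A ⊗ (ι (ten E B) ⊗ asci F D G)) ∘ (ι A ⊗ asc (ten E B) F (ten D G))
      ∘ asc A (ten (ten E B) F) (ten D G) ∘ ((ι A ⊗ asci E B F) ⊗ ι (ten D G))
      ∘ (asc A E (ten B F) ⊗ ι (ten D G))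
    = (ι A ⊗ asci E B (ten (ten F D) G)) ∘ asc A E (ten B (ten (ten F D) G))
      ∘ (ι (ten A E) ⊗ (ι B ⊗ asci F D G)) ∘ (ι (ten A E) ⊗ asc B F (ten D G))
      ∘ asc (ten A E) (ten B F) (ten D G)) by acoh.
  rw coh1. rw (slide_xG (sym F D) A E B G).
  assert (coh2 : (ι A ⊗ (ι B ⊗ asci E D (ten F G))) ∘ (ι A ⊗ (ι B ⊗ (ι E ⊗ asc D F G)))
      ∘ (ι A ⊗ asc B E (ten (ten D F) G))
    = (ι A ⊗ asc B (ten E D) (ten F G)) ∘ (ι A ⊗ (asc B E D ⊗ ι (ten F G)))
      ∘ (ι A ⊗ asci (ten B E) D (ten F G)) ∘ (ι A ⊗ (ι (ten B E) ⊗ asc D F G))) by acoh.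
  rw coh2. rwr (slide_xD (sym E B) A D F G).
  assert (coh3 : (ι A ⊗ asci (ten E B) D (ten F G)) ∘ (ι A ⊗ (ι (ten E B) ⊗ asc D F G))
      ∘ (ι A ⊗ asci E B (ten (ten D F) G)) ∘ asc A E (ten B (ten (ten D F) G))
    = (ι A ⊗ (asci E B D ⊗ ι (ten F G))) ∘ (ι A ⊗ asci E (ten B D) (ten F G))
      ∘ asc A E (ten (ten B D) (ten F G)) ∘ (ι (ten A E) ⊗ asci B D (ten F G))
      ∘ (ι (ten A E) ⊗ (ι B ⊗ asc D F G))) by acoh.
  rw coh3.
  assert (coh4 : asci A (ten B D) (ten E (ten F G)) ∘ (ι A ⊗ asci B D (ten E (ten F G)))
      ∘ (ι A ⊗ (ι B ⊗ asc D E (ten F G)))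
    = asci A (ten B D) (ten E (ten F G)) ∘ (ι A ⊗ asc (ten B D) E (ten F G))
      ∘ (ι A ⊗ (asci B D E ⊗ ι (ten F G))) ∘ (ι A ⊗ asci B (ten D E) (ten F G))) by acoh.
  rw coh4. rwr (slide_Bx (sym E D) A B F G). cancel. reflexivity.
Qed.

Lemma theta_assoc A B D E F G :
  (ι _ ⊗ asc E F G) ∘ (asc A B D ⊗ ι _) ∘ th (ten A B) (ten E F) D G ∘ (th A E B F ⊗ ι _)
  = th A E (ten B D) (ten F G) ∘ (ι _ ⊗ th B F D G) ∘ asc (ten A E) (ten B F) (ten D G).
Proof. rewrite theta_assoc_left, theta_assoc_right. reflexivity. Qed.

(** The same law with the [θ]'s moved across, in the shape needed for the
    functoriality of the tensor of Aux(C). *)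
Lemma theta_assoc_transpose D F E D' F' E' :
  (ι _ ⊗ th F E F' E') ∘ th D (ten F E) D' (ten F' E') ∘ (asc D F E ⊗ asc D' F' E')
  = asc (ten D D') (ten F F') (ten E E') ∘ (th D F D' F' ⊗ ι _) ∘ th (ten D F) E (ten D' F') E'.
Proof.
  apply (iso_cancel_l (th D D' (ten F E) (ten F' E') ∘ (ι _ ⊗ th F F' E E'))
           ((ι _ ⊗ th F E F' E') ∘ th D (ten F E) D' (ten F' E'))).
  { rassoc. rw (theta_involutive D D' (ten F E) (ten F' E')).
    rw (whisk_l2 (theta_involutive F F' E E')). reflexivity. }
  apply eq_by_precomp; intros X k. rassoc. rw (whisk_l2 (theta_involutive F E F' E')).
  rw (theta_involutive D (ten F E) D' (ten F' E')). rwr (theta_assoc D F E D' F' E').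
  rw (whisk_r2 (theta_involutive D F D' F')). rw (theta_involutive (ten D F) E (ten D' F') E').
  rewrite (ten_split_rl (asc D F E)). rassoc. reflexivity.
Qed.

(** ** Restriction calculus and total morphisms *)

Lemma restr1 {A B} (f : Hm A B) : f ∘ rst f = f. Proof. exact (R1 HC f). Qed.
Lemma restr2 {A B D} (f : Hm A B) (g : Hm A D) : rst f ∘ rst g = rst g ∘ rst f.
Proof. exact (R2 HC f g). Qed.
Lemma restr3 {A B D} (f : Hm A B) (g : Hm A D) : rst (g ∘ rst f) = rst g ∘ rst f.
Proof. exact (R3 HC f g). Qed.
Lemma restr4 {A B D} (f : Hm A B) (g : Hm B D) : rst g ∘ f = f ∘ rst (g ∘ f).
Proof. exact (R4 HC f g). Qed.
Lemma rst_ten {A B D E} (f : Hm A B) (g : Hm D E) : rst (f ⊗ g) = rst f ⊗ rst g.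
Proof. exact (rst_tenm HC f g). Qed.

Lemma rst_id A : rst (ι A) = ι A.
Proof. rewrite <- (comp_id_l (rst (ι A))). apply restr1. Qed.
Lemma rst_comp_absorb {A B D} (g : Hm B D) (f : Hm A B) : rst (g ∘ f) = rst (g ∘ f) ∘ rst f.
Proof. rewrite <- (restr1 f) at 1. rewrite compA. apply restr3. Qed.
Lemma rst_comp_rst {A B D} (x : Hm B D) (f : Hm A B) : rst (x ∘ f) = rst (rst x ∘ f).
Proof. rewrite restr4, restr3, restr2, <- rst_comp_absorb. reflexivity. Qed.
Lemma rst_comp_total {A B D} (g : Hm B D) (f : Hm A B) : rst g = ι _ -> rst (g ∘ f) = rst f.
Proof. intro H. rewrite rst_comp_rst, H, comp_id_l. reflexivity. Qed.
Lemma rst_fix {A B D} (x : Hm B D) (f : Hm A B) : rst (x ∘ f) = rst f -> rst x ∘ f = f.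
Proof. intro H. rewrite restr4, H, restr1. reflexivity. Qed.

Lemma iso_total {A B} (i : Hm A B) (j : Hm B A) : j ∘ i = ι _ -> rst i = ι _.
Proof.
  intro H. rewrite <- (comp_id_l (rst i)), <- (rst_id A), <- H, <- rst_comp_absorb. reflexivity.
Qed.
Lemma total_comp {A B D} (g : Hm B D) (f : Hm A B) :
  rst g = ι _ -> rst f = ι _ -> rst (g ∘ f) = ι _.
Proof. intros H1 H2. rewrite rst_comp_total; assumption. Qed.
Lemma total_ten {A B D E} (f : Hm A B) (g : Hm D E) :
  rst f = ι _ -> rst g = ι _ -> rst (f ⊗ g) = ι _.
Proof. intros H1 H2. rewrite rst_ten, H1, H2, ten_id. reflexivity. Qed.

(** [total] proves that a composite of coherence isomorphisms (and [θ]) is total. *)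
Ltac total := repeat first [ apply total_comp | apply total_ten | apply rst_id
  | apply (iso_total _ (asci _ _ _)); apply asci_asc
  | apply (iso_total _ (asc _ _ _)); apply asc_asci
  | apply (iso_total _ (lui _)); apply lui_lu | apply (iso_total _ (lu _)); apply lu_lui
  | apply (iso_total _ (rui _)); apply rui_ru | apply (iso_total _ (ru _)); apply ru_rui
  | apply (iso_total _ (sym _ _)); apply sym_sym | rewrite theta_unfold ].

Local Notation aH := (@auxHom C).
Local Notation sim := (@aux_sim C _ _).

(** A total witness [h] yields [▷]: the restriction equation is automatic. *)
Lemma sim_of_tri {A B E E'} (f : Hm A (ten B E)) (f' : Hm A (ten B E')) (h : Hm E E') :
  rst h = ι _ -> (ι B ⊗ h) ∘ f = f' -> sim (existT _ E f) (existT _ E' f').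
Proof.
  intros Hh Hf. apply rst_step. split; simpl.
  - rewrite <- Hf, rst_comp_total; [reflexivity|]. apply total_ten; [apply rst_id | exact Hh].
  - exists h. exact Hf.
Qed.
Lemma sim_of_tri_inv {A B E E'} (f : Hm A (ten B E)) (f' : Hm A (ten B E')) (h : Hm E' E) :
  rst h = ι _ -> (ι B ⊗ h) ∘ f' = f -> sim (existT _ E f) (existT _ E' f').
Proof. intros Hh Hf. apply rst_sym. apply (sim_of_tri _ _ h Hh Hf). Qed.

#[local] Instance aux_sim_equiv A B : Equivalence (@aux_sim C A B).
Proof.
  destruct (clos_rst_is_equiv (auxHom A B) (@aux_tri C A B)) as [Hrefl Htrans Hsym].
  split; [exact Hrefl | exact Hsym | exact Htrans].
Qed.

Lemma closure_congr {X Y : Type} {R : relation X} (S : relation Y) {HS : Equivalence S}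
  (F : X -> Y) : (forall a b, R a b -> S (F a) (F b)) ->
  forall a b, clos_refl_sym_trans X R a b -> S (F a) (F b).
Proof.
  intros HF a b Hab. induction Hab.
  - apply HF; assumption.
  - reflexivity.
  - symmetry; assumption.
  - etransitivity; eassumption.
Qed.

Lemma cmp_proper_l {A B D} (p : aH A B) (q q' : aH B D) :
  aux_tri q q' -> sim (aux_cmp q p) (aux_cmp q' p).
Proof.
  destruct p as [E f], q as [F g], q' as [F' g']. intros [Hr [h Hh]]. simpl in *.
  apply rst_step. split; simpl.
  - rewrite 2!(rst_comp_total (asc _ _ _)) by total.
    rewrite (rst_comp_rst (g ⊗ ι E)), (rst_comp_rst (g' ⊗ ι E)), !rst_ten, Hr. reflexivity.
  - exists (h ⊗ ι E). rewrite <- Hh. apply eq_by_precomp; intros X k. nf.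
    rwr (nat_asc_m h). reflexivity.
Qed.
Lemma cmp_proper_r {A B D} (p p' : aH A B) (q : aH B D) :
  aux_tri p p' -> sim (aux_cmp q p) (aux_cmp q p').
Proof.
  destruct p as [E f], p' as [E' f'], q as [F g]. intros [Hr [h Hh]]. simpl in *.
  apply rst_step. split; simpl.
  - (* [f] already lies in the domain of [ι ⊗ h] *)
    assert (Hfix : (ι B ⊗ rst h) ∘ f = f).
    { rewrite <- (rst_id B), <- rst_ten. apply rst_fix. rewrite Hh. symmetry. exact Hr. }
    rewrite 2!(rst_comp_total (asc _ _ _)) by total. rewrite <- Hh.
    rewrite compA, <- interchange, <- compA, (rst_comp_rst (ι (ten D F) ⊗ h)), rst_ten, rst_id.
    rewrite compA, interchange, <- compA, Hfix. reflexivity.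
  - exists (ι F ⊗ h). rewrite <- Hh. apply eq_by_precomp; intros X k. nf.
    rwr (nat_asc_r h). rwr (interchange g h). reflexivity.
Qed.

#[local] Instance aux_cmp_proper A B D :
  Proper (sim ==> sim ==> sim) (@aux_cmp C A B D).
Proof.
  intros g g' Hg f f' Hf. transitivity (aux_cmp g' f).
  - apply (closure_congr (R := @aux_tri C _ _) sim (fun x => aux_cmp x f)); [|exact Hg].
    intros; apply cmp_proper_l; assumption.
  - apply (closure_congr (R := @aux_tri C _ _) sim (fun x => aux_cmp g' x)); [|exact Hf].
    intros; apply cmp_proper_r; assumption.
Qed.

Lemma tenm_proper_l {A B A' B'} (p p' : aH A B) (q : aH A' B') :
  aux_tri p p' -> sim (aux_tenm p q) (aux_tenm p' q).
Proof.
  destruct p as [E f], p' as [E' f'], q as [F g]. intros [Hr [h Hh]]. simpl in *.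
  apply rst_step. split; simpl.
  - rewrite 2!(rst_comp_total (th _ _ _ _)) by total. rewrite !rst_ten, Hr. reflexivity.
  - exists (h ⊗ ι F). rewrite <- Hh, ten_post_l. rassoc. rw (theta_nat_l h). reflexivity.
Qed.
Lemma tenm_proper_r {A B A' B'} (p : aH A B) (q q' : aH A' B') :
  aux_tri q q' -> sim (aux_tenm p q) (aux_tenm p q').
Proof.
  destruct q as [E f], q' as [E' f'], p as [F g]. intros [Hr [h Hh]]. simpl in *.
  apply rst_step. split; simpl.
  - rewrite 2!(rst_comp_total (th _ _ _ _)) by total. rewrite !rst_ten, Hr. reflexivity.
  - exists (ι F ⊗ h). rewrite <- Hh, ten_post_r. rassoc. rw (theta_nat_r h). reflexivity.
Qed.

#[local] Instance aux_tenm_proper A B A' B' :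
  Proper (sim ==> sim ==> sim) (@aux_tenm C A B A' B').
Proof.
  intros p p' Hp q q' Hq. transitivity (aux_tenm p' q).
  - apply (closure_congr (R := @aux_tri C _ _) sim (fun x => aux_tenm x q)); [|exact Hp].
    intros; apply tenm_proper_l; assumption.
  - apply (closure_congr (R := @aux_tri C _ _) sim (fun x => aux_tenm p' x)); [|exact Hq].
    intros; apply tenm_proper_r; assumption.
Qed.

(** The restriction only depends on [rst f], which [▷] preserves. *)
#[local] Instance aux_rst_proper A B : Proper (sim ==> sim) (@aux_rst C A B).
Proof.
  intros p p'. apply (closure_congr (R := @aux_tri C _ _) sim (@aux_rst C A B)).
  intros [E f] [E' f'] [Hr _]. simpl in *. unfold aux_rst. simpl. rewrite Hr. reflexivity.
Qed.

(** ** The embedding [g ↦ [ρ⁻¹ ∘ g, I]] of C into Aux(C) *)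

Lemma unit_absorb B E : (ι B ⊗ lu E) ∘ asc B unt E ∘ (rui B ⊗ ι E) = ι _.
Proof. rw (triangle_eq B E). cancel. reflexivity. Qed.

Lemma aux_id_of A : aux_id A = aux_of (ι A).
Proof. unfold aux_id, aux_of. rewrite comp_id_r. reflexivity. Qed.
Lemma aux_rst_of {A B} (p : aH A B) : aux_rst p = aux_of (rst (projT2 p)).
Proof. reflexivity. Qed.
Lemma aux_of_eq {A B} (a b : Hm A B) : a = b -> sim (aux_of a) (aux_of b).
Proof. intros ->. reflexivity. Qed.

Lemma aux_of_cmp {A B D} (a : Hm B D) (b : Hm A B) :
  sim (aux_cmp (aux_of a) (aux_of b)) (aux_of (a ∘ b)).
Proof.
  unfold aux_cmp, aux_of; simpl. apply (sim_of_tri _ _ (lu unt)); [total|].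
  apply eq_by_precomp; intros X k. nf. rw (unit_absorb D unt). rwr (nat_rui a). reflexivity.
Qed.
Lemma aux_of_tenm {A B A' B'} (a : Hm A B) (b : Hm A' B') :
  sim (aux_tenm (aux_of a) (aux_of b)) (aux_of (a ⊗ b)).
Proof.
  unfold aux_tenm, aux_of; simpl. apply (sim_of_tri _ _ (lu unt)); [total|].
  rewrite ten_comp. rassoc. rw (theta_rui B B'). reflexivity.
Qed.
Lemma aux_of_cmp_l {A B B'} (a : Hm B B') (p : aH A B) :
  sim (aux_cmp (aux_of a) p) (existT _ (projT1 p) ((a ⊗ ι _) ∘ projT2 p)).
Proof.
  destruct p as [E f]. unfold aux_cmp, aux_of; simpl. apply (sim_of_tri _ _ (lu E)); [total|].
  apply eq_by_precomp; intros X k. nf. rw (unit_absorb B' E). reflexivity.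
Qed.
Lemma aux_of_cmp_r {A A' B} (p : aH A' B) (a : Hm A A') :
  sim (aux_cmp p (aux_of a)) (existT _ (projT1 p) (projT2 p ∘ a)).
Proof.
  destruct p as [E f]. unfold aux_cmp, aux_of; simpl. apply (sim_of_tri _ _ (ru E)); [total|].
  apply eq_by_precomp; intros X k. nf. rw (kelly_r B E). rw (nat_ru f). cancel. reflexivity.
Qed.

Lemma aux_cmpA {A B D E} (h : aH D E) (g : aH B D) (f : aH A B) :
  sim (aux_cmp h (aux_cmp g f)) (aux_cmp (aux_cmp h g) f).
Proof.
  destruct h as [E3 h], g as [E2 g], f as [E1 f]. unfold aux_cmp; simpl.
  apply (sim_of_tri_inv _ _ (asc E3 E2 E1)); [total|].
  apply eq_by_precomp; intros X k. nf. rwr (nat_asc_l h). rw (pentagon_eq E E3 E2 E1).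
  reflexivity.
Qed.
Lemma aux_cmp1l {A B} (f : aH A B) : sim (aux_cmp (aux_id B) f) f.
Proof.
  rewrite aux_id_of, aux_of_cmp_l. destruct f as [E f]; simpl.
  rewrite ten_id, comp_id_l. reflexivity.
Qed.
Lemma aux_cmp1r {A B} (f : aH A B) : sim (aux_cmp f (aux_id A)) f.
Proof.
  rewrite aux_id_of, aux_of_cmp_r. destruct f as [E f]; simpl. rewrite comp_id_r. reflexivity.
Qed.

Lemma aux_R1 {A B} (f : aH A B) : sim (aux_cmp f (aux_rst f)) f.
Proof.
  rewrite aux_rst_of, aux_of_cmp_r. destruct f as [E f]; simpl. rewrite restr1. reflexivity.
Qed.
Lemma aux_R2 {A B D} (f : aH A B) (g : aH A D) :
  sim (aux_cmp (aux_rst f) (aux_rst g)) (aux_cmp (aux_rst g) (aux_rst f)).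
Proof. rewrite !aux_rst_of, !aux_of_cmp. apply aux_of_eq, restr2. Qed.
Lemma aux_R3 {A B D} (f : aH A B) (g : aH A D) :
  sim (aux_rst (aux_cmp g (aux_rst f))) (aux_cmp (aux_rst g) (aux_rst f)).
Proof.
  rewrite (aux_rst_of g), (aux_rst_of f), aux_of_cmp, aux_rst_of. apply aux_of_eq.
  destruct f as [E1 f], g as [E2 g]; simpl.
  rewrite (rst_comp_total (asc _ _ _)) by total.
  rewrite (compA (g ⊗ ι unt)), <- nat_rui, <- compA, (rst_comp_total (rui _)) by total.
  apply restr3.
Qed.
Lemma aux_R4 {A B D} (f : aH A B) (g : aH B D) :
  sim (aux_cmp (aux_rst g) f) (aux_cmp f (aux_rst (aux_cmp g f))).
Proof.
  rewrite !aux_rst_of, aux_of_cmp_l, aux_of_cmp_r. destruct f as [E1 f], g as [E2 g]; simpl.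
  rewrite (rst_comp_total (asc _ _ _)) by total.
  replace (rst g ⊗ ι E1) with (rst (g ⊗ ι E1)) by (rewrite rst_ten, rst_id; reflexivity).
  rewrite restr4. reflexivity.
Qed.

Lemma aux_tenm_cmp {A B D A' B' D'} (f : aH A B) (g : aH B D) (f' : aH A' B') (g' : aH B' D') :
  sim (aux_tenm (aux_cmp g f) (aux_cmp g' f')) (aux_cmp (aux_tenm g g') (aux_tenm f f')).
Proof.
  destruct f as [E f], g as [F g], f' as [E' f'], g' as [F' g']. unfold aux_tenm, aux_cmp; simpl.
  apply (sim_of_tri _ _ (th F E F' E')); [total|].
  rewrite !ten_comp. apply eq_by_precomp; intros X k. rassoc.
  rw (theta_assoc_transpose D F E D' F' E').
  pose proof (theta_nat g (ι E) g' (ι E')) as Hnat. rewrite ten_id in Hnat. nf. rw Hnat.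
  reflexivity.
Qed.
Lemma aux_tenm_id A B : sim (aux_tenm (aux_id A) (aux_id B)) (aux_id (ten A B)).
Proof. rewrite !aux_id_of, aux_of_tenm, ten_id. reflexivity. Qed.

Lemma aux_of_iso {A B} (a : Hm A B) (b : Hm B A) :
  a ∘ b = ι _ -> sim (aux_cmp (aux_of a) (aux_of b)) (aux_id _).
Proof. intro H. rewrite aux_of_cmp, H, aux_id_of. reflexivity. Qed.

Lemma aux_asc_nat {A A' B B' D D'} (f : aH A A') (g : aH B B') (h : aH D D') :
  sim (aux_cmp (aux_of (asc A' B' D')) (aux_tenm (aux_tenm f g) h))
      (aux_cmp (aux_tenm f (aux_tenm g h)) (aux_of (asc A B D))).
Proof.
  rewrite aux_of_cmp_l, aux_of_cmp_r. destruct f as [E f], g as [F g], h as [G h].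
  unfold aux_tenm; simpl. apply (sim_of_tri _ _ (asc E F G)); [total|].
  rewrite ten_post_l, ten_post_r. apply eq_by_precomp; intros X k. nf.
  rw (theta_assoc A' B' D' E F G). rw (nat_asc f g h). reflexivity.
Qed.
Lemma aux_lu_nat {A B} (f : aH A B) :
  sim (aux_cmp (aux_of (lu B)) (aux_tenm (aux_id unt) f)) (aux_cmp f (aux_of (lu A))).
Proof.
  rewrite aux_of_cmp_l, aux_of_cmp_r. destruct f as [E f]. unfold aux_tenm, aux_id; simpl.
  apply (sim_of_tri _ _ (lu E)); [total|].
  rewrite (ten_split_lr (rui unt)). apply eq_by_precomp; intros X k. nf.
  rw (theta_lu B E). rw (nat_lu f). reflexivity.
Qed.
Lemma aux_ru_nat {A B} (f : aH A B) :
  sim (aux_cmp (aux_of (ru B)) (aux_tenm f (aux_id unt))) (aux_cmp f (aux_of (ru A))).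
Proof.
  rewrite aux_of_cmp_l, aux_of_cmp_r. destruct f as [E f]. unfold aux_tenm, aux_id; simpl.
  apply (sim_of_tri _ _ (ru E)); [total|].
  rewrite (ten_split_rl f). apply eq_by_precomp; intros X k. nf.
  rw (theta_ru B E). rw (nat_ru f). reflexivity.
Qed.
Lemma aux_sym_nat {A A' B B'} (f : aH A A') (g : aH B B') :
  sim (aux_cmp (aux_of (sym A' B')) (aux_tenm f g)) (aux_cmp (aux_tenm g f) (aux_of (sym A B))).
Proof.
  rewrite aux_of_cmp_l, aux_of_cmp_r. destruct f as [E f], g as [F g]. unfold aux_tenm; simpl.
  apply (sim_of_tri _ _ (sym E F)); [total|].
  apply eq_by_precomp; intros X k. nf. rw (theta_sym A' E B' F). rw (nat_sym f g). reflexivity.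
Qed.

Lemma aux_rst_tenm {A B D E} (f : aH A B) (g : aH D E) :
  sim (aux_rst (aux_tenm f g)) (aux_tenm (aux_rst f) (aux_rst g)).
Proof.
  rewrite !aux_rst_of, aux_of_tenm. apply aux_of_eq. destruct f as [E1 f], g as [E2 g]; simpl.
  rewrite (rst_comp_total (th _ _ _ _)) by total. apply rst_ten.
Qed.

(** The coherence axioms only involve embedded morphisms, so they are
    inherited from C through the functoriality of the embedding. *)
Lemma aux_pentagon A B D E :
  sim (aux_cmp (aux_of (asc A B (ten D E))) (aux_of (asc (ten A B) D E)))
      (aux_cmp (aux_tenm (aux_id A) (aux_of (asc B D E)))
         (aux_cmp (aux_of (asc A (ten B D) E)) (aux_tenm (aux_of (asc A B D)) (aux_id E)))).
Proof. rewrite !aux_id_of, !aux_of_tenm, !aux_of_cmp. apply aux_of_eq, pentagon_eq. Qed.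
Lemma aux_triangle A B :
  sim (aux_cmp (aux_tenm (aux_id A) (aux_of (lu B))) (aux_of (asc A unt B)))
      (aux_tenm (aux_of (ru A)) (aux_id B)).
Proof. rewrite !aux_id_of, !aux_of_tenm, !aux_of_cmp. apply aux_of_eq, triangle_eq. Qed.
Lemma aux_hexagon A B D :
  sim (aux_cmp (aux_tenm (aux_id B) (aux_of (sym A D)))
         (aux_cmp (aux_of (asc B A D)) (aux_tenm (aux_of (sym A B)) (aux_id D))))
      (aux_cmp (aux_of (asc B D A)) (aux_cmp (aux_of (sym A (ten B D))) (aux_of (asc A B D)))).
Proof. rewrite !aux_id_of, !aux_of_tenm, !aux_of_cmp. apply aux_of_eq, hexagon_eq. Qed.

End AuxCategory.

Theorem proposition3p7 (C : smr_data) (HC : SMRC C) :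
  @is_smrc (Aux_data C) (@aux_sim C).
Proof.
  constructor; intros.
  - apply clos_rst_is_equiv.
  - now apply (aux_cmp_proper HC).
  - now apply aux_rst_proper.
  - now apply (aux_tenm_proper HC).
  - apply (aux_cmpA HC).
  - apply (aux_cmp1l HC).
  - apply (aux_cmp1r HC).
  - apply (aux_R1 HC).
  - apply (aux_R2 HC).
  - apply (aux_R3 HC).
  - apply (aux_R4 HC).
  - apply (aux_tenm_cmp HC).
  - apply (aux_tenm_id HC).
  - apply (aux_of_iso HC), (asc_asci HC).
  - apply (aux_of_iso HC), (asci_asc HC).
  - apply (aux_of_iso HC), (lu_lui HC).
  - apply (aux_of_iso HC), (lui_lu HC).
  - apply (aux_of_iso HC), (ru_rui HC).
  - apply (aux_of_iso HC), (rui_ru HC).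
  - apply (aux_of_iso HC), (sym_sym HC).
  - apply (aux_asc_nat HC).
  - apply (aux_lu_nat HC).
  - apply (aux_ru_nat HC).
  - apply (aux_sym_nat HC).
  - apply (aux_pentagon HC).
  - apply (aux_triangle HC).
  - apply (aux_hexagon HC).
  - apply (aux_rst_tenm HC).
Qed.
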